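(* Consider a fair division instance with $n$ agents, $m$ divisible goods, additive valuations and generalized assignment constraints. For any weight vector $w\in\mathbb{R}_+^n$ with all components positive, and any feasible allocation $x=(x_1,\dots,x_n)$ maximizing $\sum_{i=1}^n w_i v_i(x_i)$ over all feasible allocations, the envy graph of $x$ is acyclic.
   Context: An allocation is $x=(x_1,\dots,x_n)$ with $x_i\in[0,1]^m$ and $\sum_i x_{i,g}\le 1$ for each good $g$. Additive valuations: $v_i(y)=\sum_g y_g v_{i,g}$, $v_{i,g}\ge0$. Generalized assignment constraints: agent $i$ has sizes $s_i(g)\ge0$ and budget $B_i\ge0$; a bundle $y$ is feasible for $i$ iff $\sum_g s_i(g)y_g\le B_i$; an allocation is feasible if each $x_i$ is feasible for $i$. Agent $i$ (feasibly) envies agent $h$ in $x$ if there is a bundle $y\le x_h$ (componentwise) feasible for $i$ with $v_i(y)>v_i(x_i)$. The envy graph of $x$ is the directed graph on vertex set $[n]$ with an edge $i\to h$ iff $i$ envies $h$. *)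

From mathcomp Require Import all_boot all_order all_algebra.
Set Implicit Arguments. Unset Strict Implicit. Unset Printing Implicit Defensive.
Import Order.TTheory GRing.Theory Num.Theory.
Local Open Scope ring_scope.

Section FairDivision.
Variables (R : realFieldType) (n m : nat).

(* A bundle: fractions y_g in [0,1] of each good g. *)
Definition bundle := 'I_m -> R.
Definition allocation := 'I_n -> bundle.

Definition is_bundle (y : bundle) : Prop := forall g, 0 <= y g /\ y g <= 1.

Definition is_allocation (x : allocation) : Prop :=
  (forall i, is_bundle (x i)) /\ (forall g, \sum_(i < n) x i g <= 1).

Definition value (v : 'I_n -> 'I_m -> R) (i : 'I_n) (y : bundle) : R :=
  \sum_(g < m) y g * v i g.

Definition feasible_for (s : 'I_n -> 'I_m -> R) (B : 'I_n -> R)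
  (i : 'I_n) (y : bundle) : Prop :=
  \sum_(g < m) s i g * y g <= B i.

Definition feasible_allocation s B (x : allocation) : Prop :=
  is_allocation x /\ forall i, feasible_for s B i (x i).

Definition envies v s B (x : allocation) (i h : 'I_n) : Prop :=
  exists y : bundle,
    (forall g, 0 <= y g /\ y g <= x h g) /\
    feasible_for s B i y /\ value v i (x i) < value v i y.

(* The envy graph (edge i -> h iff i envies h) has no directed cycle:
   there is no closed walk c_0 -> c_1 -> ... -> c_k -> c_0 (k >= 0). *)
Definition envy_graph_acyclic v s B (x : allocation) : Prop :=
  forall (k : nat) (c : 'I_k.+1 -> 'I_n),
    ~ (forall j : 'I_k.+1, envies v s B x (c j) (c (ordS j))).

End FairDivision.

(** Suppose agents c_0, ..., c_k form a closed
    walk in the envy graph, agent c_j preferring a feasible bundle y_j that is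
    dominated by x_{c_(j+1)}.  Let every c_j give up a fraction 1/(k+1) of its
    bundle in exchange for the same fraction of y_j.  Each agent's new bundle
    is a convex combination of bundles feasible for it, hence feasible; since
    the y_j together take no more of any good than the bundles x_{c_j}
    together release, the result is again an allocation.  Each traded
    fraction strictly increases the weighted welfare, contradicting the
    maximality of x.  No sign conditions on valuations, sizes or budgets
    are needed. *)

From mathcomp Require Import all_boot all_order all_algebra.
From mathcomp Require Import lra.

Set Implicit Arguments.
Unset Strict Implicit.
Unset Printing Implicit Defensive.
Import Order.TTheory GRing.Theory Num.Theory.
Local Open Scope ring_scope.

Section Trade.
Variables (R : realFieldType) (n m K : nat).
Variables (c : 'I_K -> 'I_n) (y : 'I_K -> bundle R m) (t : R).

(* A closed walk may visit agent i several times: i then trades a fraction t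
   of its bundle against every y_j with c j = i. *)
Definition trade (x : allocation R n m) : allocation R n m :=
  fun i g => x i g + t * \sum_(j | c j == i) (y j g - x i g).

Lemma sum_trade (f : 'I_m -> R) (x : allocation R n m) (i : 'I_n) :
  \sum_(g < m) f g * trade x i g =
  \sum_(g < m) f g * x i g +
    t * \sum_(j | c j == i) (\sum_(g < m) f g * y j g - \sum_(g < m) f g * x i g).
Proof.
under eq_bigr do rewrite mulrDr.
rewrite big_split /=; congr (_ + _).
under [in RHS]eq_bigr do rewrite -sumrB.
under [in RHS]eq_bigr do under eq_bigr do rewrite -mulrBr.
rewrite exchange_big mulr_sumr; apply: eq_bigr => g _.
by rewrite mulrCA -mulr_sumr.
Qed.

Lemma value_trade (v : 'I_n -> 'I_m -> R) (x : allocation R n m) (i : 'I_n) :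
  value v i (trade x i) =
  value v i (x i) + t * \sum_(j | c j == i) (value v i (y j) - value v i (x i)).
Proof.
have valueE z : value v i z = \sum_(g < m) v i g * z g.
  by apply: eq_bigr => g _; rewrite mulrC.
rewrite !valueE sum_trade; congr (_ + _ * _).
by apply: eq_bigr => j _; rewrite valueE.
Qed.

Lemma sum_fibers (F : 'I_n -> 'I_K -> R) :
  \sum_(i < n) \sum_(j | c j == i) F i j = \sum_(j < K) F (c j) j.
Proof.
rewrite (exchange_big_dep xpredT) //=; apply: eq_bigr => j _.
by rewrite (big_pred1 (c j)).
Qed.

Lemma column_trade (x : allocation R n m) (g : 'I_m) :
  \sum_(i < n) trade x i g =
  \sum_(i < n) x i g + t * (\sum_(j < K) y j g - \sum_(j < K) x (c j) g).
Proof. by rewrite big_split /= -mulr_sumr sum_fibers sumrB. Qed.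

Lemma welfare_trade (w : 'I_n -> R) (v : 'I_n -> 'I_m -> R) (x : allocation R n m) :
  \sum_(i < n) w i * value v i (trade x i) =
  \sum_(i < n) w i * value v i (x i) +
    t * (\sum_(j < K) w (c j) * value v (c j) (y j) -
         \sum_(j < K) w (c j) * value v (c j) (x (c j))).
Proof.
under eq_bigr do rewrite value_trade mulrDr mulrCA.
rewrite big_split /= -mulr_sumr -sumrB; congr (_ + _ * _).
under [in RHS]eq_bigr do rewrite -mulrBr.
rewrite -(sum_fibers (fun i j => w i * (value v i (y j) - value v i (x i)))).
by apply: eq_bigr => i _; rewrite mulr_sumr.
Qed.

Hypotheses (t_ge0 : 0 <= t) (tK_le1 : t * K%:R <= 1).

Lemma fiber_weight_le1 (i : 'I_n) : t * #|[pred j | c j == i]|%:R <= 1.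
Proof.
apply: le_trans tK_le1; rewrite ler_wpM2l // ler_nat.
by apply: leq_trans (max_card _) _; rewrite card_ord.
Qed.

Lemma convex_step_le (S U : R) (P : pred 'I_K) (Y : 'I_K -> R) :
  t * #|P|%:R <= 1 -> S <= U -> (forall j, P j -> Y j <= U) ->
  S + t * \sum_(j | P j) (Y j - S) <= U.
Proof.
move=> hP hS hY; rewrite sumrB sumr_const -mulr_natr.
have hYU : \sum_(j | P j) Y j <= U * #|P|%:R.
  by rewrite mulr_natr -sumr_const; apply: ler_sum.
have h1 : 0 <= (U - S) * (1 - t * #|P|%:R) by apply: mulr_ge0; rewrite subr_ge0.
have h2 : 0 <= t * (U * #|P|%:R - \sum_(j | P j) Y j).
  by apply: mulr_ge0; rewrite ?subr_ge0.
lra.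
Qed.

Lemma trade_ge0 (x : allocation R n m) (i : 'I_n) (g : 'I_m) :
  0 <= x i g -> (forall j, 0 <= y j g) -> 0 <= trade x i g.
Proof.
move=> x0 y0; rewrite /trade sumrB sumr_const -mulr_natr.
have h1 : 0 <= x i g * (1 - t * #|[pred j | c j == i]|%:R).
  by apply: mulr_ge0; rewrite ?subr_ge0 ?fiber_weight_le1.
have h2 : 0 <= t * \sum_(j | c j == i) y j g by apply: mulr_ge0; rewrite ?sumr_ge0.
lra.
Qed.

Lemma trade_feasible_for s B (x : allocation R n m) (i : 'I_n) :
  feasible_for s B i (x i) -> (forall j, c j = i -> feasible_for s B i (y j)) ->
  feasible_for s B i (trade x i).
Proof.
move=> xf yf; rewrite /feasible_for sum_trade.
by apply: convex_step_le => // [|j /eqP/yf]; first exact: fiber_weight_le1.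
Qed.

Lemma trade_feasible s B (x : allocation R n m) :
  feasible_allocation s B x ->
  (forall j, feasible_for s B (c j) (y j)) -> (forall j g, 0 <= y j g) ->
  (forall g, \sum_(j < K) y j g <= \sum_(j < K) x (c j) g) ->
  feasible_allocation s B (trade x).
Proof.
move=> [[xb xcol] xf] yf y0 ycol.
have x'0 i g : 0 <= trade x i g by apply: trade_ge0 => //; exact: (xb i g).1.
have x'col g : \sum_(i < n) trade x i g <= 1.
  rewrite column_trade; apply: le_trans (xcol g); rewrite gerDl.
  by apply: mulr_ge0_le0; rewrite ?subr_le0.
split; last by move=> i; apply: trade_feasible_for => // j <-.
split=> // i g; split=> //; apply: le_trans (x'col g).
by rewrite (bigD1 i) //= lerDl sumr_ge0.
Qed.

End Trade.

Theorem lemma2 (R : realFieldType) (n m : nat)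
  (v : 'I_n -> 'I_m -> R) (s : 'I_n -> 'I_m -> R) (B : 'I_n -> R)
  (hv : forall i g, 0 <= v i g) (hs : forall i g, 0 <= s i g)
  (hB : forall i, 0 <= B i)
  (w : 'I_n -> R) (hw : forall i, 0 < w i)
  (x : allocation R n m)
  (hx : feasible_allocation s B x)
  (hmax : forall x' : allocation R n m, feasible_allocation s B x' ->
     \sum_(i < n) w i * value v i (x' i) <= \sum_(i < n) w i * value v i (x i)) :
  envy_graph_acyclic v s B x.
Proof.
move=> k c /fin_all_exists[y hy].
pose t : R := (k.+1)%:R^-1.
have t_gt0 : 0 < t by rewrite invr_gt0 ltr0n.
have t_ge0 := ltW t_gt0.
have tK_le1 : t * k.+1%:R <= 1 by rewrite mulVf ?pnatr_eq0.
have ycol g : \sum_(j < k.+1) y j g <= \sum_(j < k.+1) x (c j) g.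
  rewrite [leRHS](reindex_inj (@ordS_inj k.+1)) /=.
  by apply: ler_sum => j _; exact: ((hy j).1 g).2.
have feas : feasible_allocation s B (trade c y t x).
  apply: trade_feasible => // [j | j g]; [exact: (hy j).2.1 | exact: ((hy j).1 g).1].
apply/negP: (hmax _ feas); rewrite -ltNge welfare_trade ltrDl pmulr_rgt0 // subr_gt0.
apply: ltr_sum => [|j _]; first by apply/hasP; exists ord0; rewrite ?mem_index_enum.
by rewrite ltr_pM2l //; exact: (hy j).2.2.
Qed.
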